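(* Let $C$ be a column of type $B$ or of type $D$ which can be split. Then $C$ is admissible.
   Context: Fix $n\ge2$. $\mathcal B_n$ is the totally ordered alphabet $1\prec\cdots\prec n\prec0\prec\bar n\prec\cdots\prec\bar1$; $\mathcal D_n$ is the partially ordered alphabet $1\prec\cdots\prec n-1\prec n,\bar n\prec\overline{n-1}\prec\cdots\prec\bar1$ with $n,\bar n$ incomparable; $\bar{\bar k}=k$, $\bar 0=0$; a letter $x$ is unbarred if $x\preceq n$. A column of type $B$ is a vertical sequence $x_1,\dots,x_l$ of letters of $\mathcal B_n$ (read top to bottom; reading $\mathrm w(C)=x_1\cdots x_l$, height $h(C)=l$) which is strictly increasing except that the letter $0$ may be repeated. A column of type $D$ is a sequence $x_1,\dots,x_l$ of letters of $\mathcal D_n$ with $x_{i+1}\not\preceq x_i$ for all $i$. $C$ contains the pair $(z,\bar z)$ if $C$ contains a $0$ (for $z=0$) or both letters $z\preceq n$ and $\bar z$. $C$ is admissible if $h(C)\le n$ and for every pair $z=x_p$, $\bar z=x_q$ with $z\preceq n$ one has $|q-p|\ge h(C)-z+1$. Splitting, type $B$: let $I_C=\{z_1\succeq z_2\succeq\cdots\succeq z_s\}$ be the multiset consisting of $r$ copies of $0$ ($r$ = number of $0$'s in $C$) followed by the unbarred letters $z_{r+1}\succ\cdots\succ z_s$ such that $(z,\bar z)$ occurs in $C$. $C$ can be split if there exist unbarred letters $t_1\succ\cdots\succ t_s$ such that $t_1$ is the greatest letter with $t_1\prec z_1$, $t_1\notin C$, $\bar t_1\notin C$, and for $i\ge2$,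 $t_i$ is the greatest letter with $t_i\prec\min(t_{i-1},z_i)$, $t_i\notin C$, $\bar t_i\notin C$. Then $rC$ is obtained from $C$ by replacing $\bar z_i$ by $\bar t_i$ for each $i$ (for $z_i=0$ a letter $0$ is replaced) and reordering, and $lC$ by replacing $z_i$ by $t_i$ for each $i$ and reordering. Type $D$: $\widehat C$ is the column of type $B$ obtained from $C$ by replacing each factor $\bar n\,n$ by $00$; $C$ can be split if $\widehat C$ can, and then $lC=l\widehat C$, $rC=r\widehat C$. *)

From mathcomp Require Import all_boot all_order all_algebra.
Set Implicit Arguments. Unset Strict Implicit. Unset Printing Implicit Defensive.
Import Order.TTheory GRing.Theory Num.Theory.
Local Open Scope ring_scope.

(* Letters are encoded as integers: k (1 <= k <= n) is the unbarred letter k,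
   -k is the barred letter \bar k, and 0 is the letter 0 (type B only). A column is the sequence of its letters
   read top to bottom (x_1 :: x_2 :: ... :: x_l). *)

Definition barL (x : int) : int := - x.

(* ---------- Type B alphabet 1 < ... < n < 0 < \bar n < ... < \bar 1 ------- *)
Definition validB (n : nat) (x : int) : bool := `|x| <= n%:Z.

Definition rankB (n : nat) (x : int) : int :=
  if 0 < x then x else if x == 0 then n%:Z + 1 else 2 * n%:Z + 2 + x.

Definition ltB (n : nat) (x y : int) : bool := rankB n x < rankB n y.

Definition columnB (n : nat) (C : seq int) : bool :=
  all (validB n) C &&
  sorted (fun x y => ltB n x y || ((x == 0) && (y == 0))) C.

(* ---------- Type D alphabet: 1 < ... < n-1 < n, \bar n < \bar{n-1} < ... ---- *)
Definition validD (n : nat) (x : int) : bool := (0 < `|x|) && (`|x| <= n%:Z).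

Definition rankD (n : nat) (x : int) : int :=
  if 0 < x then x else 2 * n%:Z + 1 + x.

Definition ltD (n : nat) (x y : int) : bool :=
  (rankD n x < rankD n y) && ~~ ((x == n%:Z) && (y == - n%:Z)).

Definition leD (n : nat) (x y : int) : bool := (x == y) || ltD n x y.

Definition columnD (n : nat) (C : seq int) : bool :=
  all (validD n) C && sorted (fun x y => ~~ leD n y x) C.

(* unbarred letters (z <= n) are the z with 1 <= z <= n *)
Definition admissible (n : nat) (C : seq int) : Prop :=
  (size C <= n)%N /\
  forall (p q : nat) (z : int),
    (p < size C)%N -> (q < size C)%N -> 0 < z -> z <= n%:Z ->
    nth 0 C p = z -> nth 0 C q = barL z ->
    `|p%:Z - q%:Z| >= (size C)%:Z - z + 1.

(* I_C = z_1 >= ... >= z_s : r copies of 0 followed by the unbarred z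
   (decreasing) such that both z and \bar z occur in C *)
Definition I_C (n : nat) (C : seq int) : seq int :=
  nseq (count_mem 0 C) 0 ++
  [seq k%:Z | k <- rev (iota 1 n) & (k%:Z \in C) && (barL k%:Z \in C)].

(* for z in I_C (z = 0 or unbarred), an unbarred t satisfies t < z in B_n
   iff t < bndB n z as integers *)
Definition bndB (n : nat) (z : int) : int := if z == 0 then n%:Z + 1 else z.

(* upper bound (strict) for t_i (index i is 0-based): z_1 for i = 0,
   min(t_{i-1}, z_i) otherwise *)
Definition split_bound (n : nat) (C : seq int) (ts : seq int) (i : nat) : int :=
  if i == 0%N then bndB n (nth 0 (I_C n C) 0)
  else Num.min (nth 0 ts i.-1) (bndB n (nth 0 (I_C n C) i)).

Definition split_candidate (n : nat) (C : seq int) (b t : int) : bool :=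
  (1 <= t) && (t < b) && (t \notin C) && (barL t \notin C).

Definition is_greatest (P : int -> bool) (t : int) : Prop :=
  P t /\ forall u, P u -> u <= t.

Definition can_be_splitB (n : nat) (C : seq int) : Prop :=
  exists ts : seq int,
    size ts = size (I_C n C) /\
    forall i : nat, (i < size ts)%N ->
      is_greatest (split_candidate n C (split_bound n C ts i)) (nth 0 ts i).

Fixpoint hatD (n : nat) (C : seq int) : seq int :=
  match C with
  | x :: ((y :: s) as t) =>
      if (x == - n%:Z) && (y == n%:Z) then 0 :: 0 :: hatD n s
      else x :: hatD n t
  | _ => C
  end.

Definition can_be_splitD (n : nat) (C : seq int) : Prop :=
  can_be_splitB n (hatD n C).

From mathcomp Require Import all_boot all_order all_algebra zify.
Import Order.TTheory GRing.Theory Num.Theory.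
Set Implicit Arguments. Unset Strict Implicit. Unset Printing Implicit Defensive.
Local Open Scope ring_scope.

(* Let [z_1, ..., z_s] be the list I_C (r zeros, then the letters z with both
   z and \bar z in C) and t_1 > ... > t_s the splitting letters: they are
   distinct, neither t_i nor \bar t_i occurs in C, and t_i < z_i.  If z sits at
   position p and \bar z at position q of C, sortedness puts every letter at
   position <= p in [1..z] and every letter at position >= q in
   [\bar z..\bar 1], so p + (l - q + 1) letters of C lie in these ranges.
   Counting over k = 1..z, that number is z + #paired - #absent, where
   #paired counts the z_i <= z and #absent the k with neither k nor \bar k
   in C; the t_i attached to the paired z_i <= z are absent letters <= z, so
   the number is at most z and q - p >= l - z + 1.  For z = n the r further
   t_i attached to the zeros give l <= n.  A column of type D reduces to
   \hat C, except for the pair (n, \bar n) which only needs p <> q. *)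

Lemma count_mem_swap (T : eqType) (s t : seq T) :
  uniq s -> uniq t -> count (mem t) s = count (mem s) t.
Proof.
move=> us ut; rewrite -!size_filter; apply/perm_size/uniq_perm; rewrite ?filter_uniq //.
by move=> x; rewrite !mem_filter andbC.
Qed.

Lemma count_take_drop (T : Type) (x0 : T) (P : pred T) (s : seq T) (p q : nat) :
  (p < q <= size s)%N ->
  (forall i, (i <= p)%N -> P (nth x0 s i)) ->
  (forall i, (q <= i < size s)%N -> P (nth x0 s i)) ->
  (p.+1 + (size s - q) <= count P s)%N.
Proof.
case/andP=> lt_pq le_qs Pl Pr.
have allP_take : all P (take p.+1 s).
  apply/(all_nthP x0) => i; rewrite size_take_min ltn_min => /andP[hi _].
  by rewrite nth_take //; apply: Pl.
have allP_drop : all P (drop q s).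
  apply/(all_nthP x0) => i; rewrite size_drop => hi.
  by rewrite nth_drop; apply: Pr; rewrite leq_addr -ltn_subRL.
move: allP_take allP_drop; rewrite !all_count size_drop size_takel ?(leq_trans lt_pq) //.
move=> /eqP take_count /eqP <-.
rewrite -{2}(cat_take_drop p.+1 s) count_cat take_count leq_add2l.
rewrite -(subnKC lt_pq) addnC -drop_drop.
by rewrite -[X in (_ <= count P X)%N](cat_take_drop (q - p.+1)) count_cat leq_addl.
Qed.

Lemma leq_count_nth (T : Type) (x0 y0 : T) (P Q : pred T) (s t : seq T) :
  size s = size t ->
  (forall i, (i < size t)%N -> P (nth y0 t i) -> Q (nth x0 s i)) ->
  (count P t <= count Q s)%N.
Proof.
elim: t s => [|y t IH] [|x s] //= [size_st] PQ.
have := PQ 0%N erefl; have := IH s size_st (fun i => PQ i.+1).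
by case: (P y); case: (Q x) => //=; lia.
Qed.

Definition paired (D : seq int) (k : int) : bool := (k \in D) && (- k \in D).
Definition absent (D : seq int) (k : int) : bool := (k \notin D) && (- k \notin D).
Definition letter_le (z : nat) (x : int) : bool := (x != 0) && (`|x| <= z%:Z).
Definition unbarred_upto (z : nat) : seq int := [seq k%:Z | k <- iota 1 z].

Lemma mem_unbarred_upto z x : (x \in unbarred_upto z) = (0 < x) && (x <= z%:Z).
Proof.
apply/mapP/idP => [[k]|]; first by rewrite mem_iota => hk ->; lia.
by case: x => // k hk; exists k; rewrite ?mem_iota; lia.
Qed.

Lemma uniq_unbarred_upto z : uniq (unbarred_upto z).
Proof. by rewrite map_inj_uniq ?iota_uniq // => a b []. Qed.

Lemma count_letters_upto (D : seq int) (z : nat) : uniq [seq x <- D | x != 0] ->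
  (count (letter_le z) D + count (absent D) (unbarred_upto z)
   = z + count (paired D) (unbarred_upto z))%N.
Proof.
move=> uD; set U := unbarred_upto z; set D' := [seq x <- D | x != 0].
have uUU : uniq (U ++ map -%R U).
  rewrite cat_uniq uniq_unbarred_upto (map_inj_uniq oppr_inj) uniq_unbarred_upto andbT /=.
  by apply/hasPn => _ /mapP[y + ->]; rewrite !mem_unbarred_upto; lia.
have mem_D' k : k \in U -> (k \in D') = (k \in D) /\ (- k \in D') = (- k \in D).
  by rewrite mem_unbarred_upto !mem_filter oppr_eq0 => /andP[/gt_eqF-> _].
have -> : count (letter_le z) D = count (mem (U ++ map -%R U)) D'.
  rewrite count_filter; apply: eq_count => x /=; rewrite mem_cat mem_unbarred_upto.
  rewrite -[X in X \in map _ _]opprK (mem_map oppr_inj) mem_unbarred_upto /letter_le.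
  by case: (ltrgt0P x) => hx; rewrite ?andbF //= ?andbT ?gtr0_norm ?ltr0_norm; lia.
rewrite count_mem_swap // count_cat.
have -> : count (mem D') (map -%R U) = count (fun k => - k \in D') U by rewrite count_map.
have sizeU : size U = z by rewrite size_map size_iota.
set a : pred int := fun k => k \in D'; set b : pred int := fun k => - k \in D'.
change (count a U + count b U + count (absent D) U = z + count (paired D) U)%N.
have := count_predUI a b U; have := count_predC (predU a b) U.
have -> : count (predC (predU a b)) U = count (absent D) U.
  by apply: eq_in_count => k /mem_D'[]; rewrite /= /absent /a /b negb_or => -> ->.
have -> : count (predI a b) U = count (paired D) U.
  by apply: eq_in_count => k /mem_D'[] /=; rewrite /a /b => -> ->.
by rewrite sizeU; lia.
Qed.

Definition stepB (n : nat) (x y : int) : bool := ltB n x y || ((x == 0) && (y == 0)).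

Lemma stepB_trans n : transitive (stepB n).
Proof. by move=> y x z; rewrite /stepB /ltB /rankB; repeat case: ifP => ?; lia. Qed.

Lemma columnB_rank_sorted n D :
  columnB n D -> sorted (fun x y => rankB n x <= rankB n y) D.
Proof.
case/andP=> _; apply: sub_sorted => x y.
by case/orP => [/ltW //|/andP[/eqP-> /eqP->]].
Qed.

Lemma uniq_nonzero_columnB n D : columnB n D -> uniq [seq x <- D | x != 0].
Proof.
case/andP=> _ /(sorted_filter (@stepB_trans n) (fun x => x != 0)) sorted_D'.
apply: (sorted_uniq (leT := ltB n)).
- by move=> y x z; apply: lt_trans.
- by move=> x; rewrite /ltB ltxx.
apply: (sub_in_sorted (P := fun x : int => x != 0)) sorted_D'.
- by move=> x y x0 _; rewrite /stepB (negPf x0) orbF.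
- by apply/allP => x; rewrite mem_filter => /andP[].
Qed.

Lemma letter_le_rankB_below n (z : nat) x :
  (0 < z <= n)%N -> validB n x -> rankB n x <= rankB n z%:Z -> letter_le z x.
Proof. by rewrite /validB /letter_le /rankB; repeat case: ifP => ?; lia. Qed.

Lemma letter_le_rankB_above n (z : nat) x :
  (0 < z <= n)%N -> validB n x -> rankB n (- z%:Z) <= rankB n x -> letter_le z x.
Proof. by rewrite /validB /letter_le /rankB; repeat case: ifP => ?; lia. Qed.

Lemma rankB_lt_bar n (z : nat) : (0 < z <= n)%N -> rankB n z%:Z < rankB n (- z%:Z).
Proof. by rewrite /rankB; repeat case: ifP => ?; lia. Qed.

Lemma columnB_pair_gap n D (z : nat) (p q : nat) :
  columnB n D -> (0 < z <= n)%N -> (p < size D)%N -> (q < size D)%N ->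
  nth 0 D p = z%:Z -> nth 0 D q = - z%:Z ->
  (p < q)%N /\ (p.+1 + (size D - q) <= count (letter_le z) D)%N.
Proof.
move=> colD z_bnd hp hq Dp Dq.
have rank_trans : transitive (fun x y : int => rankB n x <= rankB n y).
  by move=> y x z'; apply: le_trans.
have rank_mono := sorted_leq_nth rank_trans (fun x => lexx _) 0 (columnB_rank_sorted colD).
have valid i : (i < size D)%N -> validB n (nth 0 D i).
  by move=> hi; case/andP: colD => /allP/(_ _ (mem_nth 0 hi)).
have lt_pq : (p < q)%N.
  rewrite ltnNge; apply/negP => /(rank_mono q p hq hp).
  by rewrite Dp Dq leNgt rankB_lt_bar.
split=> //; apply: (count_take_drop (x0 := 0)); rewrite ?lt_pq 1?ltnW //.
- move=> i le_ip; have hi := leq_ltn_trans le_ip hp.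
  by apply: letter_le_rankB_below (valid i hi) _; rewrite // -Dp rank_mono.
- move=> i /andP[le_qi hi].
  by apply: letter_le_rankB_above (valid i hi) _; rewrite // -Dq rank_mono.
Qed.

Lemma admissible_columnB n D :
  columnB n D -> (size D <= n)%N ->
  (forall z, (z <= n)%N -> (count (letter_le z) D <= z)%N) -> admissible n D.
Proof.
move=> colD size_D count_D; split=> // p q [z|//] hp hq z0 zn Dp Dq.
have z_bnd : (0 < z <= n)%N by apply/andP; lia.
have [lt_pq gap] := columnB_pair_gap colD z_bnd hp hq Dp Dq.
have := count_D z (elimT andP z_bnd).2; lia.
Qed.

Definition paired_letters (n : nat) (D : seq int) : seq int :=
  [seq k%:Z | k <- rev (iota 1 n) & paired D k%:Z].

Lemma I_C_cat n D : I_C n D = nseq (count_mem 0 D) 0 ++ paired_letters n D.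
Proof. by []. Qed.

Lemma mem_paired_letters n D x : x \in paired_letters n D -> 0 < x <= n%:Z.
Proof. by case/mapP => k; rewrite mem_filter mem_rev mem_iota => /andP[_ hk] ->; lia. Qed.

Lemma size_I_C n D :
  size (I_C n D) = (count_mem (0 : int) D + count (paired D) (unbarred_upto n))%N.
Proof. by rewrite I_C_cat size_cat size_nseq size_map size_filter count_rev count_map. Qed.

Lemma count_paired_letters n D (z : nat) : (z <= n)%N ->
  count (fun k => k <= z%:Z) (paired_letters n D) = count (paired D) (unbarred_upto z).
Proof.
move=> zn; rewrite count_map count_filter count_rev count_map -(subnKC zn) iotaD count_cat.
rewrite [X in (_ + X)%N](@eq_in_count _ _ pred0) ?count_pred0 ?addn0 => [|k]; last first.
  by rewrite mem_iota /= lez_nat => /andP[+ _]; rewrite add1n ltnNge => /negPf->.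
by apply: eq_in_count => k; rewrite mem_iota /= lez_nat => /andP[_ /=]; rewrite add1n ltnS => ->.
Qed.

Lemma bndB_I_C n D i : bndB n (nth 0 (I_C n D) i) <= n%:Z + 1.
Proof.
have [hi|hi] := ltnP i (size (I_C n D)); last by rewrite nth_default.
move: (mem_nth 0 hi); rewrite /bndB; case: ifP => // _.
rewrite I_C_cat mem_cat => /orP[/nseqP[-> _]//|/mem_paired_letters/andP[_]].
by move/le_trans; apply; rewrite lerDl.
Qed.

Lemma split_bound_le_bndB n D ts i :
  split_bound n D ts i <= bndB n (nth 0 (I_C n D) i).
Proof. by rewrite /split_bound; case: eqP => [->|_] //; rewrite ge_min lexx orbT. Qed.

Section SplitLetters.
Variables (n : nat) (D ts : seq int).
Hypothesis size_ts : size ts = size (I_C n D).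
Hypothesis ts_candidate : forall i, (i < size ts)%N ->
  split_candidate n D (split_bound n D ts i) (nth 0 ts i).

Lemma split_letter_lt_bound i : (i < size ts)%N ->
  1 <= nth 0 ts i < split_bound n D ts i.
Proof. by move/ts_candidate; case/andP=> /andP[/andP[-> ->]]. Qed.

Lemma split_letter_lt_bndB i : (i < size ts)%N ->
  1 <= nth 0 ts i < bndB n (nth 0 (I_C n D) i).
Proof.
move/split_letter_lt_bound/andP=> [-> /lt_le_trans]; apply.
exact: split_bound_le_bndB.
Qed.

Lemma mem_split_letters t : t \in ts -> (t \in unbarred_upto n) && absent D t.
Proof.
case/(nthP 0) => i hi <-; have := ts_candidate hi.
case/andP=> /andP[_ tD] tbD; rewrite /absent tD tbD mem_unbarred_upto !andbT.
move: (split_letter_lt_bndB hi) (bndB_I_C n D i).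
by move: (bndB _ _) (nth 0 ts i) => b u; lia.
Qed.

Lemma split_letters_uniq : uniq ts.
Proof.
have : sorted (fun x y => y < x) ts.
  apply/(sortedP 0) => i /split_letter_lt_bound/andP[_].
  by rewrite /split_bound /= => /lt_le_trans; apply; rewrite ge_min lexx.
by apply: sorted_uniq => [y x z lt_xy lt_yz|x]; [apply: lt_trans lt_yz lt_xy|rewrite ltxx].
Qed.

Lemma size_split_letters_le : (size ts <= count (absent D) (unbarred_upto n))%N.
Proof.
rewrite -size_filter; apply: uniq_leq_size split_letters_uniq _ => t.
by move/mem_split_letters/andP=> [tn tD]; rewrite mem_filter tn tD.
Qed.

Lemma count_paired_le_absent (z : nat) : (z <= n)%N ->
  (count (paired D) (unbarred_upto z) <= count (absent D) (unbarred_upto z))%N.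
Proof.
move=> zn; set r := count_mem 0 D; rewrite -(count_paired_letters D zn).
have size_drop_ts : size (drop r ts) = size (paired_letters n D).
  by rewrite size_drop size_ts I_C_cat size_cat size_nseq addKn.
apply: (@leq_trans (count (fun t => t <= z%:Z) (drop r ts))).
  apply: (leq_count_nth (x0 := 0) (y0 := 0) size_drop_ts) => i hi; rewrite nth_drop.
  have hri : (r + i < size ts)%N by rewrite size_ts I_C_cat size_cat size_nseq ltn_add2l.
  have := split_letter_lt_bndB hri; rewrite I_C_cat nth_cat size_nseq ltnNge leq_addr addKn.
  have /andP[z_pos _] := mem_paired_letters (mem_nth 0 hi).
  by rewrite /bndB /= gt_eqF //; move: (nth 0 ts _) (nth 0 _ i); lia.
rewrite -!size_filter; apply: uniq_leq_size.
  by rewrite filter_uniq ?drop_uniq ?split_letters_uniq.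
move=> t; rewrite !mem_filter => /andP[tz /mem_drop/mem_split_letters/andP[tn tD]].
by rewrite tD /=; move: tn; rewrite !mem_unbarred_upto; lia.
Qed.

End SplitLetters.

Lemma admissible_split_columnB n D : columnB n D -> can_be_splitB n D -> admissible n D.
Proof.
move=> colD [ts [size_ts ts_greatest]].
have ts_candidate i hi := (ts_greatest i hi).1.
have uD := uniq_nonzero_columnB colD.
apply: admissible_columnB => // [|z zn].
- have size_D : size D = (count_mem (0 : int) D + count (letter_le n) D)%N.
    rewrite -(count_predC (pred1 (0 : int)) D); congr addn; apply: eq_in_count => x xD.
    have := allP (elimT andP colD).1 x xD.
    by rewrite /validB /letter_le /= => ->; rewrite andbT.
  have := count_letters_upto n uD; have := size_split_letters_le size_ts ts_candidate.
  rewrite size_D size_ts size_I_C; lia.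
- have := count_letters_upto z uD; have := count_paired_le_absent size_ts ts_candidate zn.
  lia.
Qed.

Definition stepD (n : nat) (x y : int) : bool := ~~ leD n y x.

Lemma ltB_stepD n x y : validD n x -> validD n y -> stepD n x y ->
  ~~ ((x == - n%:Z) && (y == n%:Z)) -> ltB n x y.
Proof. by rewrite /validD /stepD /leD /ltD /rankD /ltB /rankB; repeat case: ifP => ?; lia. Qed.

Lemma stepD_bar_n_gt0 n x : validD n x -> stepD n x (- n%:Z) -> 0 < x.
Proof. by rewrite /validD /stepD /leD /ltD /rankD; repeat case: ifP => ?; lia. Qed.

Lemma stepD_n_lt0 n w : validD n w -> stepD n n%:Z w -> w < 0.
Proof. by rewrite /validD /stepD /leD /ltD /rankD; repeat case: ifP => ?; lia. Qed.

Lemma stepB_0_barred n w : validB n w -> w < 0 -> stepB n 0 w.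
Proof. by rewrite /validB /stepB /ltB /rankB ltxx eqxx; repeat case: ifP => ?; lia. Qed.

Lemma stepB_unbarred_0 n x : validB n x -> 0 < x -> stepB n x 0.
Proof. by rewrite /validB /stepB /ltB /rankB ltxx eqxx; repeat case: ifP => ?; lia. Qed.

Lemma validB_validD n x : validD n x -> validB n x.
Proof. by case/andP. Qed.

Lemma hatD_cons2 n x y s : hatD n (x :: y :: s) =
  if (x == - n%:Z) && (y == n%:Z) then 0 :: 0 :: hatD n s else x :: hatD n (y :: s).
Proof. by []. Qed.

Lemma seq_ind2 (T : Type) (P : seq T -> Prop) :
  P [::] -> (forall x, P [:: x]) ->
  (forall x y s, P s -> P (y :: s) -> P (x :: y :: s)) -> forall s, P s.
Proof.
move=> P0 P1 P2 s; elim: {s}(size s).+1 {-2}s (ltnSn (size s)) => // m IH.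
by case=> [|x [|y s]] //= lt_sm; apply: P2; apply: IH => //=; lia.
Qed.

Lemma size_hatD n C : size (hatD n C) = size C.
Proof.
elim/seq_ind2: C => // x y s IHs IHys.
by rewrite hatD_cons2; case: ifP => _ /=; rewrite ?IHs ?IHys.
Qed.

Lemma nth_hatD n C i :
  nth 0 (hatD n C) i = nth 0 C i \/ `|nth 0 C i| = n%:Z.
Proof.
elim/seq_ind2: C i => [|x|x y s IHs IHys] i; try by left.
rewrite hatD_cons2; case: ifP => [/andP[/eqP-> /eqP->]|_].
  by case: i => [|[|i]] /=; [right; rewrite normrN|right|exact: IHs].
by case: i => [|i] /=; [left|exact: IHys].
Qed.

Lemma all_hatD n (P : pred int) C : P 0 -> all P C -> all P (hatD n C).
Proof.
move=> P0; elim/seq_ind2: C => // x y s IHs IHys.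
rewrite hatD_cons2; case: ifP => _ /=; rewrite ?P0 /=.
  by case/and3P => _ _; apply: IHs.
by case/andP => -> /IHys.
Qed.

Lemma hatD_consP n y s :
  (exists t, hatD n (y :: s) = y :: t) \/
  (y = - n%:Z /\ exists s', hatD n (y :: s) = 0 :: 0 :: hatD n s').
Proof.
case: s => [|w s]; first by left; exists [::].
rewrite hatD_cons2; case: ifP => [/andP[/eqP-> _]|_]; last by left; eexists.
by right; split=> //; exists s.
Qed.

(* Each step of [hatD C] is either a step of [C] other than [\bar n n],
   or a step into or out of the inserted [0 0]. *)
Lemma sorted_hatD n C : columnD n C -> sorted (stepB n) (hatD n C).
Proof.
elim/seq_ind2: C => // x y s IHs IHys /andP[/and3P[vx vy vs] /andP[xy ys]].
have colys : columnD n (y :: s) by apply/andP; split; [apply/andP|].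
rewrite hatD_cons2; case: ifP => [/andP[_ /eqP ey]|not_barn_n].
  have {IHs} := IHs (introT andP (conj vs (path_sorted ys))).
  clear IHys colys; case: s ys vs => [|w s]; first by rewrite /= /stepB eqxx orbT.
  rewrite ey => /andP[nw _] /andP[vw _].
  have w_barred := stepB_0_barred (validB_validD vw) (stepD_n_lt0 vw nw).
  have s00 : stepB n 0 0 by rewrite /stepB eqxx orbT.
  case: (hatD_consP n w s) => [[t ->]|[_ [s' ->]]] /= => [->|/andP[_ ->]];
    by rewrite s00 ?w_barred.
have {IHys} := IHys colys.
case: (hatD_consP n y s) => [[t ->]|[ey [s' ->]]] /= -> ; rewrite andbT.
  by rewrite /stepB (ltB_stepD vx vy xy) ?not_barn_n.
by apply: stepB_unbarred_0 (validB_validD vx) (stepD_bar_n_gt0 vx _); rewrite -ey.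
Qed.

Lemma columnB_hatD n C : columnD n C -> columnB n (hatD n C).
Proof.
move=> colC; rewrite /columnB sorted_hatD // andbT.
by apply: all_hatD => //; apply: sub_all (elimT andP colC).1 => x /validB_validD.
Qed.

(* Only the pair [(n, \bar n)] can be hidden by [hatD], and for it the
   admissibility bound is at most [1] since [size C <= n]. *)
Lemma admissible_hatD n C : admissible n (hatD n C) -> admissible n C.
Proof.
rewrite /admissible size_hatD => -[size_C adm]; split=> // p q z hp hq z0 zn Cp Cq.
have [->|z_neq_n] := eqVneq z n%:Z.
  have : p != q by apply: contraTneq isT => pq; move: Cq; rewrite -pq Cp /barL; lia.
  lia.
apply: adm; rewrite ?size_hatD //.
- by case: (nth_hatD n C p) => [->|] //; rewrite Cp; lia.
- by case: (nth_hatD n C q) => [->|] //; rewrite Cq /barL normrN; lia.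
Qed.

Theorem mainTheorem3 (n : nat) (C : seq int) :
  (2 <= n)%N ->
  (columnB n C /\ can_be_splitB n C) \/ (columnD n C /\ can_be_splitD n C) ->
  admissible n C.
Proof.
move=> _ [[colC splitC]|[colC splitC]]; first exact: admissible_split_columnB.
exact/admissible_hatD/admissible_split_columnB/splitC/columnB_hatD.
Qed.
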